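(* Let $U\colon[0,1]^2\to[0,1]$ be a uninorm with neutral element $e\in(0,1)$, $U\in\mathcal U$, and let $a<b$ be idempotent elements of $U$ such that there is no idempotent element of $U$ in $(a,b)$. If there exist $y\in[0,1]$ and $x_1,x_2\in(a,b)$ with $x_1<x_2$ such that $u_{x_1}$ and $u_{x_2}$ are both non-continuous at $y$, then $U$ is pseudo-internal on $[a,b]\times[0,1]$, i.e. $U(x,z)\in\{x,z\}$ for all $(x,z)\in [a,b]\times[0,1]$ with $(x,z)\in[0,e]\times[e,1]\cup[e,1]\times[0,e]$.
   Context: A uninorm is a commutative, associative binary operation on $[0,1]$, non-decreasing in each variable, with a neutral element $e$. Underlying t-norm $T_U(x,y)=U(ex,ey)/e$, underlying t-conorm $C_U(x,y)=(U(e+(1-e)x,e+(1-e)y)-e)/(1-e)$; $\mathcal U$ is the class of uninorms for which both are continuous. For $x\in[0,1]$, $u_x(z)=U(x,z)$. An idempotent element is $x$ with $U(x,x)=x$. $U$ is pseudo-internal (on a set) if it is internal, i.e. $U(x,z)\in\{x,z\}$, at all points of that set lying in $[0,e]\times[e,1]\cup[e,1]\times[0,e]$. *)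

From Stdlib Require Export Reals Lra.
Open Scope R_scope.

Definition I01 (x : R) : Prop := 0 <= x <= 1.

(* A uninorm on [0,1] with neutral element e. Only values on [0,1]^2 matter. *)
Definition uninorm (U : R -> R -> R) (e : R) : Prop :=
  I01 e /\
  (forall x y, I01 x -> I01 y -> I01 (U x y)) /\
  (forall x y, I01 x -> I01 y -> U x y = U y x) /\
  (forall x y z, I01 x -> I01 y -> I01 z -> U x (U y z) = U (U x y) z) /\
  (forall x1 x2 y, I01 x1 -> I01 x2 -> I01 y -> x1 <= x2 -> U x1 y <= U x2 y) /\
  (forall x, I01 x -> U e x = x).

(* Underlying t-norm and t-conorm (meaningful for 0 < e < 1). *)
Definition T_U (U : R -> R -> R) (e : R) (x y : R) : R := U (e * x) (e * y) / e.
Definition C_U (U : R -> R -> R) (e : R) (x y : R) : R :=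
  (U (e + (1 - e) * x) (e + (1 - e) * y) - e) / (1 - e).

Definition continuous_on_unit_square (f : R -> R -> R) : Prop :=
  forall x y, I01 x -> I01 y ->
  forall eps, 0 < eps -> exists delta, 0 < delta /\
    forall x' y', I01 x' -> I01 y' -> Rabs (x' - x) < delta -> Rabs (y' - y) < delta ->
      Rabs (f x' y' - f x y) < eps.

Definition in_class_U (U : R -> R -> R) (e : R) : Prop :=
  continuous_on_unit_square (T_U U e) /\ continuous_on_unit_square (C_U U e).

Definition idempotent (U : R -> R -> R) (x : R) : Prop := I01 x /\ U x x = x.

(* u_x = U x, viewed as a function on [0,1]; continuity at y relative to [0,1]. *)
Definition sec_continuous_at (U : R -> R -> R) (x y : R) : Prop :=
  limit1_in (U x) I01 (U x y) y.

From Stdlib Require Import Reals Lra Classical.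
Open Scope R_scope.

(** Between the consecutive idempotents [a < b <= e] the uninorm acts like an Archimedean
    t-norm: [[a,b]] is closed and divisible under [U], no element of [(a,b)] is absorbed by
    another, and powers eventually fall below every level of [(a,b]].  Hence a discontinuity
    of a section [u_x], [x] in [(a,b)], cannot be a jump inside [[a,b]]: a value pushed up by
    such a jump escapes [[0,e]] after finitely many multiplications by a point [s], while the
    powers of [s] near the stabilizer of [y] barely move.  So [u_x] jumps from [[a,b]] over [e].
    Comparing the jumps of two sections [u_(x1)], [u_(x2)] at the same [y] (using [U x2 w = x1])
    yields an anchor: a point of the gap fixing an idempotent of the t-conorm part and jumping
    above [e] right after it, or mapping an idempotent above [e] to itself; either forces
    [U x z] in [{x, z}] throughout the gap.  The case [e < b] is the dual one under
    [U |-> 1 - U (1 - _) (1 - _)]. *)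

Definition continuous_in (f : R -> R) (lo hi : R) : Prop :=
  forall s, lo <= s <= hi -> forall eps, 0 < eps -> exists d, 0 < d /\
    forall t, lo <= t <= hi -> Rabs (t - s) < d -> Rabs (f t - f s) < eps.

Definition nondecreasing_in (f : R -> R) (lo hi : R) : Prop :=
  forall s t, lo <= s -> s <= t -> t <= hi -> f s <= f t.

Lemma Rabs_lt_intro x d : -d < x < d -> Rabs x < d.
Proof. intros [H1 H2]; apply Rabs_def1; lra. Qed.

Lemma Rabs_lt_elim x d : Rabs x < d -> -d < x < d.
Proof. intro H; apply Rabs_def2 in H; lra. Qed.

Lemma exists_right_of y d hi : 0 < d -> y < hi -> exists t, y < t <= hi /\ t < y + d.
Proof.
  intros Hd Hy. exists (Rmin (y + d / 2) hi).
  pose proof (Rmin_l (y + d / 2) hi). pose proof (Rmin_r (y + d / 2) hi).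
  assert (y < Rmin (y + d / 2) hi) by (apply Rmin_glb_lt; lra). lra.
Qed.

Lemma exists_left_of y d lo : 0 < d -> lo < y -> exists t, lo <= t < y /\ y - d < t.
Proof.
  intros Hd Hy. exists (Rmax (y - d / 2) lo).
  pose proof (Rmax_l (y - d / 2) lo). pose proof (Rmax_r (y - d / 2) lo).
  assert (Rmax (y - d / 2) lo < y) by (apply Rmax_lub_lt; lra). lra.
Qed.

Lemma continuous_sup_level f lo hi v (E : R -> Prop) c :
  continuous_in f lo hi -> v <= f hi -> E lo ->
  (forall s, E s -> lo <= s <= hi /\ f s <= v) ->
  (forall s, lo <= s <= hi -> f s < v -> E s) ->
  is_lub E c -> lo <= c <= hi /\ f c = v.
Proof.
  intros Hc Hhi Elo HEv HvE [Hub Hleast].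
  assert (Hlo : lo <= c) by (apply Hub, Elo).
  assert (Hch : c <= hi) by (apply Hleast; intros s Hs; apply HEv in Hs; lra).
  split; [lra|].
  destruct (Rtotal_order (f c) v) as [Hlt|[Heq|Hgt]]; [exfalso| exact Heq | exfalso].
  - destruct (Hc c (conj Hlo Hch) (v - f c)) as [d [Hd Hd']]; [lra|].
    destruct (Req_dec c hi) as [->|Ech]; [lra|].
    destruct (exists_right_of c d hi Hd ltac:(lra)) as [t [Ht Htd]].
    assert (Et : E t).
    { apply HvE; [lra|].
      specialize (Hd' t ltac:(lra) ltac:(apply Rabs_lt_intro; lra)).
      apply Rabs_lt_elim in Hd'. lra. }
    specialize (Hub t Et). lra.
  - destruct (Hc c (conj Hlo Hch) (f c - v)) as [d [Hd Hd']]; [lra|].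
    assert (Hnub : ~ is_upper_bound E (c - d / 2)) by (intro H; specialize (Hleast _ H); lra).
    apply not_all_ex_not in Hnub as [s Hs]. apply imply_to_and in Hs as [Es Hs].
    pose proof (Hub s Es). pose proof (HEv s Es).
    specialize (Hd' s ltac:(lra) ltac:(apply Rabs_lt_intro; lra)).
    apply Rabs_lt_elim in Hd'. lra.
Qed.

Lemma last_level_point f lo hi v : lo < hi -> continuous_in f lo hi ->
  f lo <= v -> v < f hi ->
  exists c, lo <= c < hi /\ f c = v /\ (forall s, c < s <= hi -> v < f s).
Proof.
  intros Hlh Hc Hlo Hhi.
  set (E := fun s => lo <= s <= hi /\ f s <= v).
  assert (Elo : E lo) by (split; [lra|exact Hlo]).
  destruct (completeness E) as [c Hlub].
  { exists hi; intros s [Hs _]; lra. }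
  { exists lo; exact Elo. }
  destruct (continuous_sup_level f lo hi v E c Hc ltac:(lra) Elo) as [Hc1 Hfc];
    [intros s Hs; exact Hs | intros s Hs Hfs; split; [exact Hs|lra] | exact Hlub |].
  exists c. split; [destruct (Req_dec c hi) as [->|]; lra|split; [exact Hfc|]].
  intros s Hs. destruct (Rle_dec (f s) v) as [H|H]; [|lra].
  assert (Hsc : s <= c) by (apply (proj1 Hlub); split; [lra|exact H]). lra.
Qed.

Lemma first_level_point f lo hi v : lo < hi -> nondecreasing_in f lo hi ->
  continuous_in f lo hi -> f lo < v -> v <= f hi ->
  exists c, lo < c <= hi /\ f c = v /\ (forall s, lo <= s < c -> f s < v).
Proof.
  intros Hlh Hm Hc Hlo Hhi.
  set (E := fun s => lo <= s <= hi /\ f s < v).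
  assert (Elo : E lo) by (split; [lra|exact Hlo]).
  destruct (completeness E) as [c Hlub].
  { exists hi; intros s [Hs _]; lra. }
  { exists lo; exact Elo. }
  destruct (continuous_sup_level f lo hi v E c Hc Hhi Elo) as [Hc1 Hfc];
    [intros s [Hs Hfs]; split; [exact Hs|lra] | intros s Hs Hfs; split; assumption
    | exact Hlub |].
  exists c. split; [destruct (Req_dec c lo) as [->|]; lra|split; [exact Hfc|]].
  intros s Hs.
  assert (Hnub : ~ is_upper_bound E s) by (intro H; apply (proj2 Hlub) in H; lra).
  apply not_all_ex_not in Hnub as [s' Hs']. apply imply_to_and in Hs' as [[Hs'1 Hs'2] Hs'3].
  assert (f s <= f s') by (apply Hm; lra). lra.
Qed.

Lemma nondecreasing_IVT f lo hi v : lo <= hi -> continuous_in f lo hi ->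
  f lo <= v -> v <= f hi -> exists c, lo <= c <= hi /\ f c = v.
Proof.
  intros Hlh Hc Hlo Hhi.
  destruct (Req_dec v (f hi)) as [->|Ev]; [exists hi; split; [lra|reflexivity]|].
  destruct (last_level_point f lo hi v) as [c [Hc1 [Hc2 _]]]; [| exact Hc | exact Hlo | lra |].
  { destruct (Req_dec lo hi) as [->|]; lra. }
  exists c; split; [lra|exact Hc2].
Qed.

Lemma nondecreasing_discontinuity_jump (f : R -> R) y : 0 <= y <= 1 ->
  nondecreasing_in f 0 1 -> ~ limit1_in f I01 (f y) y ->
  (y < 1 /\ exists eps, 0 < eps /\ forall t, y < t <= 1 -> f y + eps <= f t) \/
  (0 < y /\ exists eps, 0 < eps /\ forall t, 0 <= t < y -> f t <= f y - eps).
Proof.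
  intros Hy Hm Hnc. apply NNPP. intro Hn. apply Hnc. intros eps Heps.
  assert (HR : exists d1, 0 < d1 /\ forall t, y <= t <= 1 -> t < y + d1 -> f t < f y + eps).
  { destruct (Rlt_dec y 1) as [Hy1|Hy1].
    - assert (H : ~ forall t, y < t <= 1 -> f y + eps <= f t)
        by (intro H; apply Hn; left; split; [auto|exists eps; auto]).
      apply not_all_ex_not in H as [t Ht]. apply imply_to_and in Ht as [Ht1 Ht2].
      exists (t - y). split; [lra|]. intros t' H1 H2.
      apply Rle_lt_trans with (f t); [apply Hm; lra|lra].
    - exists 1. split; [lra|]. intros t H1 H2. replace t with y by lra. lra. }
  assert (HL : exists d2, 0 < d2 /\ forall t, 0 <= t <= y -> y - d2 < t -> f y - eps < f t).
  { destruct (Rlt_dec 0 y) as [Hy1|Hy1].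
    - assert (H : ~ forall t, 0 <= t < y -> f t <= f y - eps)
        by (intro H; apply Hn; right; split; [auto|exists eps; auto]).
      apply not_all_ex_not in H as [t Ht]. apply imply_to_and in Ht as [Ht1 Ht2].
      exists (y - t). split; [lra|]. intros t' H1 H2.
      apply Rlt_le_trans with (f t); [lra|apply Hm; lra].
    - exists 1. split; [lra|]. intros t H1 H2. replace t with y by lra. lra. }
  destruct HR as [d1 [Hd1 HR]], HL as [d2 [Hd2 HL]].
  exists (Rmin d1 d2). split; [apply Rmin_glb_lt; lra|].
  intros x [Hx Hd]. simpl in *. unfold R_dist, I01 in *. apply Rabs_lt_elim in Hd.
  pose proof (Rmin_l d1 d2). pose proof (Rmin_r d1 d2).
  apply Rabs_lt_intro. destruct (Rle_dec y x) as [Hyx|Hyx].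
  - specialize (HR x ltac:(lra) ltac:(lra)). assert (f y <= f x) as Hfx by (apply Hm; lra). lra.
  - specialize (HL x ltac:(lra) ltac:(lra)). assert (f x <= f y) as Hfx by (apply Hm; lra). lra.
Qed.

Lemma continuous_in_sub f lo hi lo' hi' :
  continuous_in f lo hi -> lo <= lo' -> hi' <= hi -> continuous_in f lo' hi'.
Proof.
  intros Hc Hlo Hhi s Hs eps Heps. destruct (Hc s ltac:(lra) eps Heps) as [d [Hd H]].
  exists d; split; [exact Hd|]. intros t Ht Hts. apply H; [lra|exact Hts].
Qed.

Section Uninorm.
Variables (U : R -> R -> R) (e : R).
Hypothesis He : 0 < e < 1.
Hypothesis Hu : uninorm U e.
Hypothesis Hc : in_class_U U e.

Lemma U_range x y : 0 <= x <= 1 -> 0 <= y <= 1 -> 0 <= U x y <= 1.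
Proof. destruct Hu as [_ [H _]]. apply H. Qed.

Lemma U_comm x y : 0 <= x <= 1 -> 0 <= y <= 1 -> U x y = U y x.
Proof. destruct Hu as [_ [_ [H _]]]. apply H. Qed.

Lemma U_assoc x y z : 0 <= x <= 1 -> 0 <= y <= 1 -> 0 <= z <= 1 ->
  U x (U y z) = U (U x y) z.
Proof. destruct Hu as [_ [_ [_ [H _]]]]. apply H. Qed.

Lemma U_mono_l x1 x2 y : 0 <= x1 <= 1 -> 0 <= x2 <= 1 -> 0 <= y <= 1 ->
  x1 <= x2 -> U x1 y <= U x2 y.
Proof. destruct Hu as [_ [_ [_ [_ [H _]]]]]. apply H. Qed.

Lemma U_mono_r x y1 y2 : 0 <= x <= 1 -> 0 <= y1 <= 1 -> 0 <= y2 <= 1 ->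
  y1 <= y2 -> U x y1 <= U x y2.
Proof. intros. rewrite (U_comm x y1), (U_comm x y2) by assumption. apply U_mono_l; assumption. Qed.

Lemma U_neutral_l x : 0 <= x <= 1 -> U e x = x.
Proof. destruct Hu as [_ [_ [_ [_ [_ H]]]]]. apply H. Qed.

Lemma U_neutral_r x : 0 <= x <= 1 -> U x e = x.
Proof. intros. rewrite U_comm by lra. apply U_neutral_l; lra. Qed.

Lemma U_le_right x y : 0 <= x <= e -> 0 <= y <= 1 -> U x y <= y.
Proof. intros. rewrite <- (U_neutral_l y) at 2 by assumption. apply U_mono_l; lra. Qed.

Lemma U_ge_right x y : e <= x <= 1 -> 0 <= y <= 1 -> y <= U x y.
Proof. intros. rewrite <- (U_neutral_l y) at 1 by assumption. apply U_mono_l; lra. Qed.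

Lemma U_le_left x y : 0 <= x <= 1 -> 0 <= y <= e -> U x y <= x.
Proof. intros. rewrite U_comm by lra. apply U_le_right; lra. Qed.

Lemma U_ge_left x y : 0 <= x <= 1 -> e <= y <= 1 -> x <= U x y.
Proof. intros. rewrite U_comm by lra. apply U_ge_right; lra. Qed.

Lemma U_one q : e <= q <= 1 -> U q 1 = 1.
Proof. intros. pose proof (U_ge_right q 1 H ltac:(lra)). pose proof (U_range q 1 ltac:(lra) ltac:(lra)). lra. Qed.

Lemma U_zero q : 0 <= q <= e -> U q 0 = 0.
Proof. intros. pose proof (U_le_right q 0 H ltac:(lra)). pose proof (U_range q 0 ltac:(lra) ltac:(lra)). lra. Qed.

Lemma U_continuous_T_square p q : 0 <= p <= e -> 0 <= q <= e ->
  forall eps, 0 < eps -> exists d, 0 < d /\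
  forall p' q', 0 <= p' <= e -> 0 <= q' <= e -> Rabs (p' - p) < d -> Rabs (q' - q) < d ->
  Rabs (U p' q' - U p q) < eps.
Proof.
  intros Hp Hq eps Heps.
  destruct Hc as [HT _].
  assert (HI : forall r, 0 <= r <= e -> I01 (r / e) /\ e * (r / e) = r).
  { intros r Hr. assert (E : e * (r / e) = r) by (field; lra).
    split; [|exact E]. set (R0 := r / e) in *. unfold I01. split; nra. }
  destruct (HI p Hp) as [Ip Ep], (HI q Hq) as [Iq Eq].
  destruct (HT (p / e) (q / e) Ip Iq (eps / e)) as [d [Hd Hd']].
  { apply Rdiv_lt_0_compat; lra. }
  exists (d * e). split; [nra|].
  intros p' q' Hp' Hq' H1 H2.
  destruct (HI p' Hp') as [Ip' Ep'], (HI q' Hq') as [Iq' Eq'].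
  assert (Hx : Rabs (p' / e - p / e) < d).
  { apply Rabs_lt_elim in H1. apply Rabs_lt_intro.
    set (A := p' / e) in *. set (B := p / e) in *. rewrite <- Ep, <- Ep' in H1. split; nra. }
  assert (Hy : Rabs (q' / e - q / e) < d).
  { apply Rabs_lt_elim in H2. apply Rabs_lt_intro.
    set (A := q' / e) in *. set (B := q / e) in *. rewrite <- Eq, <- Eq' in H2. split; nra. }
  specialize (Hd' _ _ Ip' Iq' Hx Hy). unfold T_U in Hd'.
  rewrite Ep, Eq, Ep', Eq' in Hd'.
  apply Rabs_lt_elim in Hd'. apply Rabs_lt_intro.
  assert (E1 : U p' q' = e * (U p' q' / e)) by (field; lra).
  assert (E2 : U p q = e * (U p q / e)) by (field; lra).
  assert (E3 : eps = e * (eps / e)) by (field; lra).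
  set (A := U p' q' / e) in *. set (B := U p q / e) in *. set (k := eps / e) in *.
  rewrite E1, E2, E3. split; nra.
Qed.

Lemma U_continuous_C_square p q : e <= p <= 1 -> e <= q <= 1 ->
  forall eps, 0 < eps -> exists d, 0 < d /\
  forall p' q', e <= p' <= 1 -> e <= q' <= 1 -> Rabs (p' - p) < d -> Rabs (q' - q) < d ->
  Rabs (U p' q' - U p q) < eps.
Proof.
  intros Hp Hq eps Heps.
  destruct Hc as [_ HC].
  assert (HI : forall r, e <= r <= 1 ->
    I01 ((r - e) / (1 - e)) /\ e + (1 - e) * ((r - e) / (1 - e)) = r).
  { intros r Hr. assert (E : e + (1 - e) * ((r - e) / (1 - e)) = r) by (field; lra).
    split; [|exact E]. set (R0 := (r - e) / (1 - e)) in *. unfold I01. split; nra. }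
  destruct (HI p Hp) as [Ip Ep], (HI q Hq) as [Iq Eq].
  destruct (HC _ _ Ip Iq (eps / (1 - e))) as [d [Hd Hd']].
  { apply Rdiv_lt_0_compat; lra. }
  exists (d * (1 - e)). split; [nra|].
  intros p' q' Hp' Hq' H1 H2.
  destruct (HI p' Hp') as [Ip' Ep'], (HI q' Hq') as [Iq' Eq'].
  assert (Hx : Rabs ((p' - e) / (1 - e) - (p - e) / (1 - e)) < d).
  { apply Rabs_lt_elim in H1. apply Rabs_lt_intro.
    set (A := (p' - e) / (1 - e)) in *. set (B := (p - e) / (1 - e)) in *.
    rewrite <- Ep, <- Ep' in H1. split; nra. }
  assert (Hy : Rabs ((q' - e) / (1 - e) - (q - e) / (1 - e)) < d).
  { apply Rabs_lt_elim in H2. apply Rabs_lt_intro.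
    set (A := (q' - e) / (1 - e)) in *. set (B := (q - e) / (1 - e)) in *.
    rewrite <- Eq, <- Eq' in H2. split; nra. }
  specialize (Hd' _ _ Ip' Iq' Hx Hy). unfold C_U in Hd'.
  rewrite Ep, Eq, Ep', Eq' in Hd'.
  apply Rabs_lt_elim in Hd'. apply Rabs_lt_intro.
  assert (E1 : U p' q' = e + (1 - e) * ((U p' q' - e) / (1 - e))) by (field; lra).
  assert (E2 : U p q = e + (1 - e) * ((U p q - e) / (1 - e))) by (field; lra).
  assert (E3 : eps = (1 - e) * (eps / (1 - e))) by (field; lra).
  set (A := (U p' q' - e) / (1 - e)) in *. set (B := (U p q - e) / (1 - e)) in *.
  set (k := eps / (1 - e)) in *.
  rewrite E1, E2, E3. split; nra.
Qed.

Lemma U_continuous_in_T q : 0 <= q <= e -> continuous_in (U q) 0 e.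
Proof.
  intros Hq s Hs eps Heps. destruct (U_continuous_T_square q s Hq Hs eps Heps) as [d [Hd H]].
  exists d; split; [exact Hd|]. intros t Ht Hts. apply H; auto. rewrite Rminus_diag, Rabs_R0; lra.
Qed.

Lemma U_continuous_in_C q : e <= q <= 1 -> continuous_in (U q) e 1.
Proof.
  intros Hq s Hs eps Heps. destruct (U_continuous_C_square q s Hq Hs eps Heps) as [d [Hd H]].
  exists d; split; [exact Hd|]. intros t Ht Hts. apply H; auto. rewrite Rminus_diag, Rabs_R0; lra.
Qed.

Lemma U_nondecreasing_in q lo hi : 0 <= q <= 1 -> 0 <= lo -> hi <= 1 ->
  nondecreasing_in (U q) lo hi.
Proof. intros Hq Hl Hh s t H1 H2 H3. apply U_mono_r; lra. Qed.

Lemma U_solve_C p v : e <= p <= 1 -> p <= v <= 1 -> exists t, e <= t <= 1 /\ U p t = v.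
Proof.
  intros Hp Hv. apply nondecreasing_IVT; [lra | apply U_continuous_in_C; lra | |].
  - rewrite U_neutral_r; lra.
  - rewrite U_one; lra.
Qed.

Lemma U_solve_T q lo hi v : 0 <= q <= e -> 0 <= lo <= hi -> hi <= e ->
  U q lo <= v <= U q hi -> exists r, lo <= r <= hi /\ U q r = v.
Proof.
  intros Hq Hl Hh Hv. apply nondecreasing_IVT; [lra| |lra|lra].
  apply (continuous_in_sub _ 0 e); [apply U_continuous_in_T|..]; lra.
Qed.

Lemma idempotent_C_absorbs_above i p : e <= i <= 1 -> U i i = i -> i <= p <= 1 -> U i p = p.
Proof.
  intros Hi Hii Hp. destruct (U_solve_C i p Hi Hp) as [t [Ht <-]].
  rewrite U_assoc, Hii by lra. reflexivity.
Qed.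

Lemma idempotent_T_absorbs_above i p : 0 <= i <= e -> U i i = i -> i <= p <= e -> U i p = i.
Proof.
  intros Hi Hii Hp. pose proof (U_le_left i p ltac:(lra) ltac:(lra)).
  pose proof (U_mono_r i i p ltac:(lra) ltac:(lra) ltac:(lra) ltac:(lra)). lra.
Qed.

Lemma idempotent_T_absorbs_below i p : 0 <= i <= e -> U i i = i -> 0 <= p <= i -> U i p = p.
Proof.
  intros Hi Hii Hp. destruct (U_solve_T i 0 i p Hi ltac:(lra) ltac:(lra)) as [r [Hr <-]].
  { rewrite U_zero, Hii; lra. }
  rewrite U_assoc, Hii by lra. reflexivity.
Qed.

Lemma idempotent_T_internal i z : 0 <= i <= e -> U i i = i -> e <= z <= 1 ->
  U i z = i \/ U i z = z.
Proof.
  intros Hi Hii Hz. set (v := U i z).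
  assert (Hv1 : i <= v) by (apply U_ge_left; lra).
  assert (Hv2 : v <= z) by (apply U_le_right; lra).
  assert (Hiv : U i v = v) by (unfold v; rewrite U_assoc, Hii by lra; reflexivity).
  destruct (Rle_dec v e) as [H|H].
  - left. pose proof (U_le_left i v ltac:(lra) ltac:(lra)). lra.
  - right. destruct (U_solve_C v z ltac:(lra) ltac:(lra)) as [t [Ht Ht']].
    assert (E : U i (U v t) = U v t) by (rewrite U_assoc, Hiv by lra; reflexivity).
    rewrite Ht' in E. exact E.
Qed.

Lemma fixing_stabilizer y : e <= y < 1 -> exists s, e <= s < 1 /\ U y s = y /\ U s s = s /\
  (forall s', s < s' <= 1 -> y < U y s').
Proof.
  intros Hy. destruct (last_level_point (U y) e 1 y) as [c [Hc1 [Hc2 Hc3]]];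
    [lra | apply U_continuous_in_C; lra | rewrite U_neutral_r; lra | rewrite U_one; lra |].
  exists c. split; [lra|split; [exact Hc2|split; [|exact Hc3]]].
  assert (H1 : c <= U c c) by (apply U_ge_right; lra).
  assert (H2 : U c c <= 1) by (apply U_range; lra).
  destruct (Req_dec (U c c) c) as [E|E]; [exact E|exfalso].
  specialize (Hc3 (U c c) ltac:(lra)). rewrite U_assoc, Hc2 in Hc3 by lra. lra.
Qed.

(** Points [t] just right of [y] factor as [t = U y sg] with [sg] just above the stabilizer
    [s] of [y], so [U x t = U (U x y) sg] is close to [U (U x y) s = U x y]. *)
Lemma section_right_continuous_C x y : 0 <= x <= e -> e <= y < 1 -> e <= U x y ->
  forall eps, 0 < eps -> exists d, 0 < d /\
  forall t, y < t < y + d -> t <= 1 -> U x t < U x y + eps.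
Proof.
  intros Hx Hy Hm eps Heps.
  destruct (fixing_stabilizer y Hy) as [s [Hs [Hys [Hss Hgt]]]].
  set (m := U x y) in *.
  assert (Hm1 : m <= 1) by (apply U_range; lra).
  assert (Hms : U m s = m) by (unfold m; rewrite <- U_assoc, Hys by lra; reflexivity).
  destruct (U_continuous_C_square m s ltac:(lra) ltac:(lra) eps Heps) as [d' [Hd' Hc']].
  destruct (exists_right_of s d' 1 Hd' ltac:(lra)) as [s1 [Hs1 Hs1d]].
  pose proof (Hgt s1 Hs1) as Hys1.
  exists (U y s1 - y). split; [lra|].
  intros t Ht Ht1.
  destruct (U_solve_C y t ltac:(lra) ltac:(lra)) as [sg [Hsg Hsg']].
  assert (Hsg1 : sg <= s1).
  { destruct (Rle_dec sg s1) as [H|H]; [exact H|exfalso].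
    pose proof (U_mono_r y s1 sg ltac:(lra) ltac:(lra) ltac:(lra) ltac:(lra)). lra. }
  assert (E : U x t = U m sg) by (rewrite <- Hsg'; unfold m; apply U_assoc; lra).
  rewrite E.
  assert (H1 : U m sg <= U m s1) by (apply U_mono_r; lra).
  specialize (Hc' m s1 ltac:(lra) ltac:(lra)
    ltac:(rewrite Rminus_diag, Rabs_R0; lra) ltac:(apply Rabs_lt_intro; lra)).
  apply Rabs_lt_elim in Hc'. rewrite Hms in Hc'. lra.
Qed.

Lemma section_left_continuous_C x y z1 : 0 <= x <= e -> e < y <= 1 -> e <= z1 < y ->
  e <= U x z1 -> forall eps, 0 < eps -> exists d, 0 < d /\
  forall t, y - d < t < y -> U x y - eps < U x t.
Proof.
  intros Hx Hy Hz Hp eps Heps.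
  destruct (first_level_point (U z1) e 1 y) as [c [Hc1 [Hc2 Hc3]]];
    [lra | apply U_nondecreasing_in; lra | apply U_continuous_in_C; lra
    | rewrite U_neutral_r; lra | rewrite U_one; lra |].
  set (p1 := U x z1) in *.
  assert (Hp1 : p1 <= 1) by (apply U_range; lra).
  assert (Ey : U x y = U p1 c) by (rewrite <- Hc2; unfold p1; apply U_assoc; lra).
  destruct (U_continuous_C_square p1 c ltac:(lra) ltac:(lra) eps Heps) as [d' [Hd' Hc']].
  destruct (exists_left_of c d' e Hd' ltac:(lra)) as [s2 [Hs2 Hs2d]].
  pose proof (Hc3 s2 ltac:(lra)) as Ht2.
  assert (Ht2' : z1 <= U z1 s2) by (apply U_ge_left; lra).
  exists (y - U z1 s2). split; [lra|].
  intros t Ht.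
  assert (H1 : U x (U z1 s2) <= U x t) by (apply U_mono_r; lra).
  assert (E2 : U x (U z1 s2) = U p1 s2) by (unfold p1; apply U_assoc; lra).
  specialize (Hc' p1 s2 ltac:(lra) ltac:(lra)
    ltac:(rewrite Rminus_diag, Rabs_R0; lra) ltac:(apply Rabs_lt_intro; lra)).
  apply Rabs_lt_elim in Hc'. lra.
Qed.

Fixpoint Upow (p : R) (n : nat) : R :=
  match n with O => e | S k => U p (Upow p k) end.

Lemma Upow_range p n : 0 <= p <= 1 -> 0 <= Upow p n <= 1.
Proof. intros Hp; induction n; simpl; [lra|apply U_range; lra]. Qed.

Ltac unit_bounds := repeat match goal with
  | |- 0 <= U _ _ <= 1 => apply U_range
  | |- 0 <= Upow _ _ <= 1 => apply Upow_range
  | |- _ => lra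
  end.

Lemma Upow_add p n m : 0 <= p <= 1 -> Upow p (n + m) = U (Upow p n) (Upow p m).
Proof.
  intros Hp; induction n; simpl.
  - rewrite U_neutral_l; [reflexivity|unit_bounds].
  - rewrite IHn. apply U_assoc; unit_bounds.
Qed.

Lemma Upow_C p n : e <= p <= 1 -> e <= Upow p n <= 1.
Proof.
  intros Hp; induction n; simpl; [lra|]. split; [|apply U_range; lra].
  pose proof (U_ge_right p (Upow p n) ltac:(lra) ltac:(lra)). lra.
Qed.

Lemma Upow_S_ge p n : e <= p <= 1 -> p <= Upow p (S n).
Proof. intros Hp. simpl. apply U_ge_left; [lra|]. apply Upow_C, Hp. Qed.

Lemma Upow_T p n : 0 <= p <= e -> 0 <= Upow p n <= e.
Proof.
  intros Hp; induction n; simpl; [lra|]. split; [apply U_range; lra|].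
  pose proof (U_le_left p (Upow p n) ltac:(lra) ltac:(lra)). lra.
Qed.

Lemma Upow_mono_base p q n : 0 <= p -> p <= q -> q <= 1 -> Upow p n <= Upow q n.
Proof.
  intros H1 H2 H3; induction n; simpl; [lra|].
  apply Rle_trans with (U q (Upow p n)); [apply U_mono_l|apply U_mono_r]; unit_bounds.
Qed.

Lemma Upow_nearly_fixes p i : e <= p <= 1 -> e <= i <= 1 -> U p i = p ->
  forall N tau, p < tau -> exists eta, 0 < eta /\
  forall s, e <= s <= 1 -> s <= i + eta -> U p (Upow s N) < tau.
Proof.
  intros Hp Hi Hpi N. induction N as [|N IHN]; intros tau Htau.
  - exists 1. split; [lra|]. intros s Hs Hs'. simpl. rewrite U_neutral_r; lra.
  - destruct (U_continuous_C_square p i Hp Hi (tau - p) ltac:(lra)) as [d [Hd Hc']].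
    destruct (IHN (p + d) ltac:(lra)) as [eta [Heta Heta']].
    exists (Rmin eta (d / 2)). split; [apply Rmin_glb_lt; lra|].
    intros s Hs Hs'.
    pose proof (Rmin_l eta (d / 2)). pose proof (Rmin_r eta (d / 2)).
    specialize (Heta' s Hs ltac:(lra)).
    pose proof (Upow_C s N Hs) as HpwN.
    simpl. rewrite (U_comm s (Upow s N)), U_assoc by lra.
    set (q := U p (Upow s N)) in *.
    assert (Hq : p <= q) by (apply U_ge_left; lra).
    assert (Hq1 : q <= 1) by (apply U_range; lra).
    set (s' := Rmax s i).
    assert (Hs'1 : i <= s' /\ s <= s' /\ s' <= 1 /\ s' <= i + d / 2).
    { unfold s'. split; [apply Rmax_r|split; [apply Rmax_l|]].
      split; apply Rmax_lub; lra. }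
    specialize (Hc' q s' ltac:(lra) ltac:(lra)
      ltac:(apply Rabs_lt_intro; lra) ltac:(apply Rabs_lt_intro; lra)).
    apply Rabs_lt_elim in Hc'. rewrite Hpi in Hc'.
    pose proof (U_mono_r q s s' ltac:(lra) ltac:(lra) ltac:(lra) ltac:(lra)). lra.
Qed.

Lemma Upow_sup_idempotent k : e <= k <= 1 -> exists i, e <= i <= 1 /\ U i i = i /\
  (forall n, Upow k n <= i) /\ (forall u, (forall n, Upow k n <= u) -> i <= u).
Proof.
  intros Hk. set (E := fun v => exists n, v = Upow k n).
  destruct (completeness E) as [i [Hub Hl]].
  { exists 1; intros v [n ->]; apply Upow_range; lra. }
  { exists e, O; reflexivity. }
  assert (Hall : forall n, Upow k n <= i) by (intro n; apply Hub; exists n; reflexivity).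
  assert (Hi1 : e <= i) by apply (Hall O).
  assert (Hi2 : i <= 1) by (apply Hl; intros v [n ->]; apply Upow_range; lra).
  exists i. split; [lra|split; [|split; [exact Hall|]]].
  - pose proof (U_ge_right i i ltac:(lra) ltac:(lra)).
    destruct (Req_dec (U i i) i) as [Eq|Ne]; [exact Eq|exfalso].
    destruct (U_continuous_C_square i i ltac:(lra) ltac:(lra) (U i i - i) ltac:(lra))
      as [d [Hd Hc']].
    assert (Hnub : ~ is_upper_bound E (i - d / 2)) by (intro H'; specialize (Hl _ H'); lra).
    apply not_all_ex_not in Hnub as [v Hv]. apply imply_to_and in Hv as [[n ->] Hv].
    pose proof (Hall n). pose proof (Upow_C k n Hk).
    specialize (Hc' (Upow k n) (Upow k n) ltac:(lra) ltac:(lra)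
      ltac:(apply Rabs_lt_intro; lra) ltac:(apply Rabs_lt_intro; lra)).
    apply Rabs_lt_elim in Hc'. rewrite <- Upow_add in Hc' by lra.
    pose proof (Hall (n + n)%nat). lra.
  - intros u Hu'. apply Hl. intros v [n ->]. apply Hu'.
Qed.

Section Gap.
Variables a b : R.
Hypothesis Ha0 : 0 <= a.
Hypothesis Haa : U a a = a.
Hypothesis Hbb : U b b = b.
Hypothesis Hab : a < b.
Hypothesis Hbe : b <= e.
Hypothesis Hno : forall c, a < c < b -> U c c <> c.

Lemma gap_closed p q : a <= p <= b -> a <= q <= b -> a <= U p q <= b.
Proof.
  intros Hp Hq. split.
  - rewrite <- Haa at 1. apply Rle_trans with (U p a); [apply U_mono_l|apply U_mono_r]; lra.
  - rewrite <- Hbb. apply Rle_trans with (U b q); [apply U_mono_l|apply U_mono_r]; lra.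
Qed.

(** The infimum [l] of the powers of [r] would be an idempotent in [(a,b)], by continuity
    of the underlying t-norm at [(l,l)]. *)
Lemma Upow_eventually_below r m : a <= r < b -> a < m <= b -> exists N, Upow r N < m.
Proof.
  intros Hr Hm. apply NNPP. intro Hn.
  assert (Hall : forall N, m <= Upow r N).
  { intro N. destruct (Rlt_dec (Upow r N) m) as [H|H]; [exfalso; apply Hn; exists N; exact H|lra]. }
  assert (Hr1 : Upow r 1 = r) by (simpl; apply U_neutral_r; lra).
  set (E := fun v => forall n, v <= Upow r (S n)).
  destruct (completeness E) as [l [Hub Hl]].
  { exists r; intros v Hv. rewrite <- Hr1. apply Hv. }
  { exists m; intro n; apply Hall. }
  assert (Hlm : m <= l) by (apply Hub; intro n; apply Hall).
  assert (Hlp : forall n, l <= Upow r (S n)) by (intro n; apply Hl; intros v Hv; apply Hv).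
  assert (Hlr : l <= r) by (rewrite <- Hr1; apply Hlp).
  apply (Hno l); [lra|].
  pose proof (U_le_left l l ltac:(lra) ltac:(lra)).
  destruct (Req_dec (U l l) l) as [Eq|Ne]; [exact Eq|exfalso].
  destruct (U_continuous_T_square l l ltac:(lra) ltac:(lra) (l - U l l) ltac:(lra))
    as [d [Hd Hc']].
  assert (Hnub : ~ (forall n, l + d / 2 <= Upow r (S n))) by (intro H'; specialize (Hub _ H'); lra).
  apply not_all_ex_not in Hnub as [n Hv].
  pose proof (Hlp n). pose proof (Upow_T r (S n) ltac:(lra)).
  specialize (Hc' (Upow r (S n)) (Upow r (S n)) ltac:(lra) ltac:(lra)
    ltac:(apply Rabs_lt_intro; lra) ltac:(apply Rabs_lt_intro; lra)).
  apply Rabs_lt_elim in Hc'. rewrite <- Upow_add in Hc' by lra.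
  pose proof (Hlp (n + S n)%nat). simpl in *. lra.
Qed.

Lemma gap_not_absorbing p q : a < p <= b -> a <= q < b -> U p q <> p.
Proof.
  intros Hp Hq Hpq.
  assert (H : forall N, U p (Upow q N) = p).
  { induction N; simpl; [rewrite U_neutral_r; lra|]. rewrite U_assoc, Hpq by unit_bounds. exact IHN. }
  destruct (Upow_eventually_below q p Hq Hp) as [N HN].
  pose proof (U_le_right p (Upow q N) ltac:(lra) ltac:(unit_bounds)) as Hle.
  rewrite H in Hle. lra.
Qed.

Lemma gap_divisible p q : a <= p <= q -> q <= b -> exists r, a <= r <= b /\ U q r = p.
Proof.
  intros Hp Hq. apply U_solve_T; [lra..|].
  rewrite U_comm, (idempotent_T_absorbs_above a q), U_comm, (idempotent_T_absorbs_below b q)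
    by lra.
  lra.
Qed.

Lemma gap_divisible_strict p q : a < p < q -> q <= b -> exists r, a < r < b /\ U q r = p.
Proof.
  intros Hp Hq. destruct (gap_divisible p q ltac:(lra) Hq) as [r [Hr Hr']].
  exists r. split; [|exact Hr'].
  destruct (Req_dec r a) as [->|Ea];
    [rewrite U_comm, (idempotent_T_absorbs_above a q) in Hr' by lra; lra|].
  destruct (Req_dec r b) as [->|Eb];
    [rewrite U_comm, (idempotent_T_absorbs_below b q) in Hr' by lra; lra|].
  lra.
Qed.

Lemma gap_U_lt_right x r : a <= x < b -> a < r <= b -> U x r < r.
Proof.
  intros Hx Hr. pose proof (U_le_right x r ltac:(lra) ltac:(lra)).
  destruct (Req_dec (U x r) r) as [E|E]; [|lra]. exfalso.
  apply (gap_not_absorbing r x); [lra|lra|]. rewrite U_comm by lra. exact E.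
Qed.

Lemma gap_U_strict_mono r p q : a <= r <= b -> a <= p < q -> q <= b -> a < U r p ->
  U r p < U r q.
Proof.
  intros Hr Hp Hq Hrp.
  destruct (gap_divisible p q ltac:(lra) ltac:(lra)) as [k [Hk Hk']].
  assert (Hkb : k < b).
  { destruct (Req_dec k b) as [->|]; [|lra].
    rewrite U_comm, (idempotent_T_absorbs_below b q) in Hk' by lra. lra. }
  pose proof (U_mono_r r p q ltac:(lra) ltac:(lra) ltac:(lra) ltac:(lra)).
  destruct (Req_dec (U r p) (U r q)) as [E|E]; [exfalso|lra].
  assert (E2 : U r p = U (U r q) k) by (rewrite <- Hk'; apply U_assoc; lra).
  rewrite <- E in E2. pose proof (gap_closed r p ltac:(lra) ltac:(lra)).
  apply (gap_not_absorbing (U r p) k); [lra|lra|auto].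
Qed.

Lemma gap_C_dichotomy x z : a <= x <= b -> e <= z <= 1 -> U x z <= b \/ e < U x z.
Proof.
  intros Hx Hz. destruct (idempotent_T_internal b z ltac:(lra) Hbb Hz) as [H|H].
  - left. rewrite <- H. apply U_mono_l; lra.
  - destruct (Rle_dec (U x z) e) as [H1|H1]; [left|right; lra].
    assert (E : U b (U x z) = U x z)
      by (rewrite U_assoc, (U_comm b x), <- U_assoc, H by lra; reflexivity).
    pose proof (U_ge_left x z ltac:(lra) ltac:(lra)).
    pose proof (U_le_left b (U x z) ltac:(lra) ltac:(lra)). lra.
Qed.

Lemma internal_at_C_idempotent x c : a <= x <= b -> e <= c <= 1 -> U c c = c ->
  U x c = x \/ U x c = c.
Proof.
  intros Hx Hc0 Hcc. set (v := U x c).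
  assert (Hv1 : x <= v) by (apply U_ge_left; lra).
  assert (Hv2 : v <= c) by (apply U_le_right; lra).
  assert (Hvc : U v c = v) by (unfold v; rewrite <- U_assoc, Hcc by lra; reflexivity).
  destruct (gap_C_dichotomy x c Hx Hc0) as [H|H]; fold v in H.
  - left. destruct (Req_dec v x) as [E|E]; [exact E|exfalso].
    destruct (gap_divisible x v ltac:(lra) ltac:(lra)) as [w [Hw Hw']].
    assert (E2 : U (U w v) c = U w (U v c)) by (symmetry; apply U_assoc; lra).
    rewrite Hvc, (U_comm w v), Hw' in E2 by lra. fold v in E2. lra.
  - right. pose proof (U_ge_right v c ltac:(lra) ltac:(lra)). lra.
Qed.

(** Write [m = U (m + eps) rb] with [rb < b] and take [N] with [rb^N < m].  If [m s^N] stayed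
    in [[0,e]], then [U m s] would too and [m = U (m s^N) (r1^N)] for the [r1 <= rb] with
    [U (U m s) r1 = m], forcing [m <= r1^N <= rb^N < m]. *)
Lemma shift_escapes_T m eps : a < m < b -> 0 < eps -> m + eps <= b ->
  exists N, forall s, e <= s <= 1 -> m + eps <= U m s -> e < U m (Upow s N).
Proof.
  intros Hm Heps Hme.
  destruct (gap_divisible m (m + eps) ltac:(lra) Hme) as [rb [Hrb Hrb']].
  assert (Hrbb : rb < b).
  { destruct (Req_dec rb b) as [->|]; [|lra].
    rewrite U_comm, (idempotent_T_absorbs_below b (m + eps)) in Hrb' by lra. lra. }
  destruct (Upow_eventually_below rb m ltac:(lra) ltac:(lra)) as [N HN].
  exists N. intros s Hs Hp1.
  destruct (Rlt_dec e (U m (Upow s N))) as [Hq|Hq]; [exact Hq|exfalso].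
  destruct N as [|N]; [simpl in HN; lra|].
  assert (Hp1e : 0 <= U m s <= e).
  { assert (U m s <= U m (Upow s (S N)))
      by (apply U_mono_r; [unit_bounds..|apply Upow_S_ge; lra]).
    pose proof (U_ge_left m s ltac:(lra) ltac:(lra)). lra. }
  set (p1 := U m s) in *.
  destruct (U_solve_T p1 a rb m Hp1e ltac:(lra) ltac:(lra)) as [r1 [Hr1 Hr1']].
  { rewrite U_comm, (idempotent_T_absorbs_above a p1) by lra. split; [lra|].
    rewrite <- Hrb'. apply U_mono_l; lra. }
  assert (Id : forall k, U (U m (Upow s k)) (Upow r1 k) = m).
  { induction k as [|k IHk]; simpl; [rewrite !U_neutral_r by unit_bounds; reflexivity|].
    assert (HA : 0 <= Upow s k <= 1) by unit_bounds.
    assert (HB : 0 <= Upow r1 k <= 1) by unit_bounds.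
    set (A := Upow s k) in *. set (B := Upow r1 k) in *.
    rewrite (U_assoc m s) by unit_bounds. fold p1.
    rewrite (U_assoc (U p1 A) r1 B), <- (U_assoc p1 A r1), (U_comm A r1),
      (U_assoc p1 r1 A), Hr1' by unit_bounds.
    exact IHk. }
  specialize (Id (S N)).
  assert (Hq0 : 0 <= U m (Upow s (S N)) <= e).
  { assert (0 <= U m (Upow s (S N)) <= 1) by unit_bounds. lra. }
  pose proof (U_le_right (U m (Upow s (S N))) (Upow r1 (S N)) Hq0 ltac:(unit_bounds)) as Hle.
  rewrite Id in Hle.
  pose proof (Upow_mono_base r1 rb (S N) ltac:(lra) ltac:(lra) ltac:(lra)). lra.
Qed.

Lemma C_factor_below y s1 : e < y <= 1 -> e <= s1 <= 1 -> y < U y s1 ->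
  exists t sg, e <= t < y /\ e <= sg <= s1 /\ U t sg = y.
Proof.
  intros Hy Hs1 Hys1.
  destruct (U_continuous_C_square y s1 ltac:(lra) Hs1 (U y s1 - y) ltac:(lra)) as [d [Hd Hc']].
  destruct (exists_left_of y d e Hd ltac:(lra)) as [t [Ht Htd]].
  specialize (Hc' t s1 ltac:(lra) Hs1 ltac:(apply Rabs_lt_intro; lra)
    ltac:(rewrite Rminus_diag, Rabs_R0; lra)).
  apply Rabs_lt_elim in Hc'.
  destruct (nondecreasing_IVT (U t) e s1 y) as [sg [Hsg Hsg']];
    [lra | apply (continuous_in_sub _ e 1); [apply U_continuous_in_C|..]; lra
    | rewrite U_neutral_r; lra | lra |].
  exists t, sg. auto.
Qed.

Lemma nonidempotent_stabilizer y : e < y <= 1 -> U y y <> y ->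
  exists s, e <= s < y /\ y < 1 /\ U y s = y /\ U s s = s /\
  (forall s', s < s' <= 1 -> y < U y s').
Proof.
  intros Hy Eyy.
  assert (Hy1 : y < 1) by (destruct (Req_dec y 1) as [->|]; [rewrite U_one in Eyy; lra|lra]).
  destruct (fixing_stabilizer y ltac:(lra)) as [s [Hs [Hys [Hss Hgt]]]].
  exists s. repeat split; try lra; auto.
  destruct (Req_dec s y) as [->|]; [contradiction|].
  pose proof (U_ge_right y s ltac:(lra) ltac:(lra)). lra.
Qed.

(** A right jump of [u_x] at [y] inside [[x,b]] is impossible: writing points right of [y] as
    [U y sg] with [sg] just above the stabilizer of [y], [U m sg] is pushed up by the jump, so
    by [shift_escapes_T] some [U m sg^N] leaves [[0,e]]; but [y sg^N] stays close to [y]. *)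
Lemma no_right_jump_in_gap x y eps d : a < x < b -> e <= y < 1 -> 0 < eps -> 0 < d ->
  U x y <= b ->
  (forall t, y < t < y + d -> t <= 1 -> U x y + eps <= U x t /\ U x t <= b) -> False.
Proof.
  intros Hx Hy Heps Hd Hm Hyp.
  set (m := U x y) in *.
  assert (Hmx : x <= m) by (apply U_ge_left; lra).
  destruct (exists_right_of y d 1 Hd ltac:(lra)) as [t0 [Ht0 Ht0d]].
  destruct (Hyp t0 ltac:(lra) ltac:(lra)) as [H1 H2].
  destruct (shift_escapes_T m eps ltac:(lra) Heps ltac:(lra)) as [N HN].
  destruct (fixing_stabilizer y Hy) as [ss [Hss [Hyss [Hssss Hgt]]]].
  destruct (Upow_nearly_fixes y ss ltac:(lra) ltac:(lra) Hyss N (y + d) ltac:(lra))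
    as [eta [Heta Hpc]].
  destruct (exists_right_of ss eta 1 Heta ltac:(lra)) as [s1 [Hs1 Hs1d]].
  pose proof (Hgt s1 Hs1) as Hys1.
  assert (Hys1' : U y s1 <= 1) by (apply U_range; lra).
  destruct (exists_right_of y (Rmin d (U y s1 - y)) 1) as [t1 [Ht1 Ht1d]].
  { apply Rmin_glb_lt; lra. }
  { lra. }
  pose proof (Rmin_l d (U y s1 - y)). pose proof (Rmin_r d (U y s1 - y)).
  destruct (U_solve_C y t1 ltac:(lra) ltac:(lra)) as [sg [Hsg Hsg']].
  assert (Hsg1 : sg <= s1).
  { destruct (Rle_dec sg s1) as [Hle|Hle]; [exact Hle|exfalso].
    pose proof (U_mono_r y s1 sg ltac:(lra) ltac:(lra) ltac:(lra) ltac:(lra)). lra. }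
  assert (Hraise : m + eps <= U m sg).
  { replace (U m sg) with (U x t1) by (rewrite <- Hsg'; unfold m; apply U_assoc; lra).
    apply (Hyp t1); lra. }
  pose proof (HN sg Hsg Hraise) as Hesc.
  pose proof (Hpc sg Hsg ltac:(lra)) as Hpu.
  pose proof (Upow_C sg N ltac:(lra)) as Hp.
  assert (Hu2 : y <= U y (Upow sg N)) by (apply U_ge_left; lra).
  assert (E : U m (Upow sg N) = U x (U y (Upow sg N)))
    by (unfold m; symmetry; apply U_assoc; unit_bounds).
  rewrite E in Hesc.
  destruct (Req_dec (U y (Upow sg N)) y) as [Ey|Ey].
  - rewrite Ey in Hesc. fold m in Hesc. lra.
  - assert (U y (Upow sg N) <= 1) by (apply U_range; lra).
    destruct (Hyp (U y (Upow sg N)) ltac:(lra) ltac:(lra)). lra.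
Qed.

(** The mirror argument for a left jump: now [y] is factored as [U t sg] with [t < y], and the
    drop of [u_x] just left of [y] is what pushes [U x sg] up. *)
Lemma no_left_jump_in_gap x y eps : a < x < b -> e < y <= 1 -> 0 < eps -> U x y <= b ->
  (forall t, e <= t < y -> U x t <= U x y - eps) -> False.
Proof.
  intros Hx Hy Heps Hm Hyp.
  set (m := U x y) in *. set (L := m - eps). assert (HL : L = m - eps) by reflexivity.
  assert (HxL : x <= L)
    by (pose proof (Hyp e ltac:(lra)) as He'; rewrite U_neutral_r in He' by lra; lra).
  destruct (Req_dec (U y y) y) as [Eyy|Eyy].
  { destruct (internal_at_C_idempotent x y ltac:(lra) ltac:(lra) Eyy) as [E|E];
      fold m in E; lra. }
  destruct (nonidempotent_stabilizer y Hy Eyy) as [s0 [Hs0 [Hy1 [Hys0 [Hs0s0 Hgt]]]]].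
  destruct (gap_divisible x L ltac:(lra) ltac:(lra)) as [rL [HrL HrL']].
  pose proof (gap_U_strict_mono rL L m ltac:(lra) ltac:(lra) ltac:(lra)) as Hst.
  rewrite U_comm, HrL' in Hst by lra. specialize (Hst ltac:(lra)).
  set (eps2 := U rL m - x).
  assert (Hrm : U rL m <= m) by (apply U_le_right; lra).
  destruct (shift_escapes_T x eps2 Hx ltac:(unfold eps2; lra) ltac:(unfold eps2; lra)) as [N HN].
  destruct (Upow_nearly_fixes s0 s0 ltac:(lra) ltac:(lra) Hs0s0 N y ltac:(lra)) as [eta [Heta Hpc]].
  destruct (exists_right_of s0 eta 1 Heta ltac:(lra)) as [s1 [Hs1 Hs1d]].
  destruct (C_factor_below y s1 Hy ltac:(lra) (Hgt s1 Hs1)) as [t [sg [Ht [Hsg Hsg']]]].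
  set (pt := U x t).
  assert (Hpt : x <= pt <= L) by (split; [apply U_ge_left; lra|apply Hyp; lra]).
  destruct (U_solve_T pt rL b x ltac:(lra) ltac:(lra) ltac:(lra)) as [r [Hr Hr']].
  { split.
    - rewrite <- HrL'. apply U_mono_l; lra.
    - rewrite U_comm, (idempotent_T_absorbs_below b pt) by lra. lra. }
  assert (Hraise : x + eps2 <= U x sg).
  { assert (E : U x sg = U r m).
    { rewrite <- Hr' at 1. rewrite (U_comm pt r), <- U_assoc by lra.
      unfold pt. rewrite <- (U_assoc x t sg), Hsg' by lra. reflexivity. }
    rewrite E. pose proof (U_mono_l rL r m ltac:(lra) ltac:(lra) ltac:(lra) ltac:(lra)).
    unfold eps2. lra. }
  pose proof (HN sg ltac:(lra) Hraise) as Hesc.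
  pose proof (Hpc sg ltac:(lra) ltac:(lra)) as Hpu.
  pose proof (Upow_C sg N ltac:(lra)) as Hp.
  assert (Upow sg N <= U s0 (Upow sg N)) by (apply U_ge_right; lra).
  assert (Hxm : U x (Upow sg N) <= U x y) by (apply U_mono_r; lra).
  fold m in Hxm. lra.
Qed.

Definition jumps_right x y :=
  e <= y < 1 /\ U x y <= b /\ forall t, y < t <= 1 -> e < U x t.

Definition jumps_left x y :=
  e < y <= 1 /\ e < U x y /\ forall t, e <= t < y -> U x t <= b.

Lemma right_jump_over_gap x y eps : a < x < b -> 0 <= y < 1 -> 0 < eps ->
  (forall t, y < t <= 1 -> U x y + eps <= U x t) -> jumps_right x y.
Proof.
  intros Hx Hy Heps HJ.
  assert (Hye : e <= y).
  { destruct (Rle_dec e y) as [H|H]; [exact H|exfalso].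
    destruct (U_continuous_in_T x ltac:(lra) y ltac:(lra) eps Heps) as [d [Hd Hc']].
    destruct (exists_right_of y d e Hd ltac:(lra)) as [t [Ht Htd]].
    specialize (Hc' t ltac:(lra) ltac:(apply Rabs_lt_intro; lra)).
    apply Rabs_lt_elim in Hc'. specialize (HJ t ltac:(lra)). lra. }
  assert (Hme : U x y < e).
  { destruct (Rlt_dec (U x y) e) as [H|H]; [exact H|exfalso].
    destruct (section_right_continuous_C x y ltac:(lra) ltac:(lra) ltac:(lra) eps Heps)
      as [d [Hd Hc']].
    destruct (exists_right_of y d 1 Hd ltac:(lra)) as [t [Ht Htd]].
    specialize (Hc' t ltac:(lra) ltac:(lra)). specialize (HJ t Ht). lra. }
  assert (Hmb : U x y <= b) by (destruct (gap_C_dichotomy x y ltac:(lra) ltac:(lra)); lra).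
  split; [lra|split; [exact Hmb|]].
  intros t Ht. destruct (gap_C_dichotomy x t ltac:(lra) ltac:(lra)) as [H|H]; [exfalso|exact H].
  apply (no_right_jump_in_gap x y eps (t - y) Hx ltac:(lra) Heps ltac:(lra) Hmb).
  intros t' Ht' Ht'1. split; [apply HJ; lra|].
  apply Rle_trans with (U x t); [apply U_mono_r; lra|exact H].
Qed.

Lemma left_jump_over_gap x y eps : a < x < b -> 0 < y <= 1 -> 0 < eps ->
  (forall t, 0 <= t < y -> U x t <= U x y - eps) -> jumps_left x y.
Proof.
  intros Hx Hy Heps HJ.
  assert (Hye : e < y).
  { destruct (Rlt_dec e y) as [H|H]; [exact H|exfalso].
    destruct (U_continuous_in_T x ltac:(lra) y ltac:(lra) eps Heps) as [d [Hd Hc']].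
    destruct (exists_left_of y d 0 Hd ltac:(lra)) as [t [Ht Htd]].
    specialize (Hc' t ltac:(lra) ltac:(apply Rabs_lt_intro; lra)).
    apply Rabs_lt_elim in Hc'. specialize (HJ t Ht). lra. }
  assert (Hlow : forall t, e <= t < y -> U x t <= b).
  { intros z1 Hz1. destruct (gap_C_dichotomy x z1 ltac:(lra) ltac:(lra)) as [H|H];
      [exact H|exfalso].
    destruct (section_left_continuous_C x y z1 ltac:(lra) ltac:(lra) Hz1 ltac:(lra) eps Heps)
      as [d [Hd Hc']].
    destruct (exists_left_of y d z1 Hd ltac:(lra)) as [t [Ht Htd]].
    specialize (Hc' t ltac:(lra)). specialize (HJ t ltac:(lra)). lra. }
  split; [lra|split; [|exact Hlow]].
  destruct (gap_C_dichotomy x y ltac:(lra) ltac:(lra)) as [H|H]; [exfalso|exact H].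
  apply (no_left_jump_in_gap x y eps Hx ltac:(lra) Heps H). intros t Ht. apply HJ; lra.
Qed.

Lemma discontinuity_jumps_over_gap x y : a < x < b -> 0 <= y <= 1 ->
  ~ sec_continuous_at U x y -> jumps_right x y \/ jumps_left x y.
Proof.
  intros Hx Hy Hnc.
  destruct (nondecreasing_discontinuity_jump (U x) y Hy) as [[Hy1 [eps [Heps HJ]]]|[Hy0 [eps [Heps HJ]]]];
    [apply U_nondecreasing_in; lra | exact Hnc | |].
  - left. apply (right_jump_over_gap x y eps); auto; lra.
  - right. apply (left_jump_over_gap x y eps); auto; lra.
Qed.

Definition internal_on_gap :=
  forall x z, a < x < b -> e <= z <= 1 -> U x z = x \/ U x z = z.

Lemma right_anchor_fixes m s : a < m < b -> e <= s <= 1 -> U s s = s -> U m s = m ->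
  forall x, a < x < b -> U x s = x.
Proof.
  intros Hm Hs Hss Hms x Hx.
  destruct (internal_at_C_idempotent x s ltac:(lra) Hs Hss) as [H|H]; [exact H|exfalso].
  destruct (Rle_dec x m) as [Hxm|Hxm].
  - pose proof (U_mono_l x m s ltac:(lra) ltac:(lra) ltac:(lra) Hxm). lra.
  - destruct (gap_divisible m x ltac:(lra) ltac:(lra)) as [r [Hr Hr']].
    assert (E : U m s = U r s) by (rewrite <- Hr', (U_comm x r), <- U_assoc, H by lra; reflexivity).
    pose proof (U_ge_left r s ltac:(lra) ltac:(lra)). pose proof (U_le_right x r ltac:(lra) ltac:(lra)).
    replace r with m in Hr' by lra.
    apply (gap_not_absorbing m x); [lra|lra|]. rewrite U_comm by lra. exact Hr'.
Qed.

Lemma right_anchor_lifts m s : a < m < b -> e <= s < 1 ->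
  (forall x, a < x < b -> U x s = x) -> (forall s', s < s' <= 1 -> e < U m s') ->
  forall x s', a < x < b -> s < s' <= 1 -> e < U x s'.
Proof.
  intros Hm Hs Hfix Hhm x s' Hx Hs'. destruct (Rle_dec m x) as [Hmx|Hmx].
  - apply Rlt_le_trans with (U m s'); [apply Hhm; lra|apply U_mono_l; lra].
  - destruct (gap_divisible_strict x m ltac:(lra) ltac:(lra)) as [r [Hr Hr']].
    assert (Hxr : x < r) by (rewrite <- Hr'; apply gap_U_lt_right; lra).
    assert (Hge : forall t, s < t <= 1 -> r <= U x t).
    { intros t Ht. rewrite <- Hr', (U_comm m r), <- U_assoc by lra.
      pose proof (Hhm t Ht). pose proof (U_range m t ltac:(lra) ltac:(lra)).
      apply U_ge_left; lra. }
    destruct (gap_C_dichotomy x s' ltac:(lra) ltac:(lra)) as [H|H]; [exfalso|exact H].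
    apply (no_right_jump_in_gap x s (r - x) (s' - s) Hx Hs ltac:(lra) ltac:(lra)
      ltac:(rewrite Hfix; lra)).
    intros t Ht Ht1. rewrite Hfix by lra. split; [pose proof (Hge t ltac:(lra)); lra|].
    apply Rle_trans with (U x s'); [apply U_mono_r; lra|exact H].
Qed.

Lemma gap_powers_stay_in_C x z : a < x < b -> e <= z <= 1 -> U x z < z ->
  (forall x', a < x' < b -> e < U x' z) -> forall n, e < U (Upow x (S n)) z.
Proof.
  intros Hx Hz Hxz Hhigh.
  assert (Haz : U a z = a).
  { destruct (idempotent_T_internal a z ltac:(lra) Haa Hz) as [H|H]; [exact H|exfalso].
    pose proof (U_mono_l a x z ltac:(lra) ltac:(lra) ltac:(lra) ltac:(lra)).
    lra. }
  assert (Hpwx : forall n, a <= Upow x (S n) <= x).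
  { induction n as [|n IHn]; simpl in *; [rewrite U_neutral_r; lra|]. split.
    + rewrite <- Haa at 1.
      apply Rle_trans with (U a (U x (Upow x n))); [apply U_mono_r|apply U_mono_l]; lra.
    + apply U_le_left; lra. }
  intro n; induction n as [|n IHn]; [simpl; rewrite U_neutral_r by lra; apply Hhigh; lra|].
  pose proof (Hpwx (S n)) as Hp.
  destruct (Req_dec (Upow x (S (S n))) a) as [Ea|Ea]; [exfalso|apply Hhigh; lra].
  assert (E1 : U x (U (Upow x (S n)) z) = a).
  { rewrite <- Haz, <- Ea. simpl. apply U_assoc; unit_bounds. }
  pose proof (U_range (Upow x (S n)) z ltac:(unit_bounds) ltac:(lra)).
  pose proof (U_ge_left x (U (Upow x (S n)) z) ltac:(lra) ltac:(lra)). lra.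
Qed.

(** If [Q0 := U x z < z], write [z = U Q0 k].  Then [z = U (x^(n+1) z) (k^(n+1))] with the
    first factor above [e], so all powers of [k] stay below [z]; their supremum is an
    idempotent, and it must equal [z], where [internal_at_C_idempotent] applies. *)
Lemma gap_absorbed_by x z : a < x < b -> e <= z <= 1 ->
  (forall x', a < x' < b -> e < U x' z) -> U x z = z.
Proof.
  intros Hx Hz Hhigh.
  assert (HQz : U x z <= z) by (apply U_le_right; lra).
  destruct (Req_dec (U x z) z) as [E|E]; [exact E|exfalso].
  pose proof (gap_powers_stay_in_C x z Hx Hz ltac:(lra) Hhigh) as Hhi.
  set (Q0 := U x z) in *.
  set (Qn := fun n => U (Upow x (S n)) z).
  assert (HQe : forall n, e < Qn n) by exact Hhi.
  assert (HQ0' : Qn O = Q0) by (unfold Qn; simpl; rewrite U_neutral_r by lra; reflexivity).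
  assert (HQ0 : e < Q0) by (rewrite <- HQ0'; apply HQe).
  destruct (U_solve_C Q0 z ltac:(lra) ltac:(lra)) as [k [Hk Hk']].
  assert (HQ1 : forall n, Qn n <= 1)
    by (intro n; unfold Qn; apply U_range; unit_bounds).
  assert (HQrec : forall n, Qn n = U (Qn (S n)) k).
  { intro n. unfold Qn at 1. rewrite <- Hk' at 1. rewrite U_assoc by unit_bounds.
    f_equal. unfold Q0. rewrite U_assoc by unit_bounds. unfold Qn. f_equal. simpl.
    apply U_comm; unit_bounds. }
  assert (Hzn : forall n, z = U (Qn n) (Upow k (S n))).
  { induction n as [|n IHn].
    - rewrite HQ0'. simpl. rewrite U_neutral_r by lra. symmetry; exact Hk'.
    - rewrite IHn at 1. rewrite HQrec.
      rewrite <- U_assoc by (pose proof (HQ1 (S n)); pose proof (HQe (S n)); unit_bounds).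
      reflexivity. }
  assert (Hkz : forall n, Upow k n <= z).
  { intros [|n]; [simpl; lra|].
    rewrite (Hzn n). apply U_ge_right; [pose proof (HQ1 n); pose proof (HQe n); lra|unit_bounds]. }
  destruct (Upow_sup_idempotent k Hk) as [i [Hi [Hii [Hub Hl]]]].
  assert (Hiz : i <= z) by (apply Hl; exact Hkz).
  assert (Hki : k <= i) by (specialize (Hub 1%nat); simpl in Hub; rewrite U_neutral_r in Hub; lra).
  assert (Ezi : z = i).
  { destruct (Rle_dec Q0 i) as [H|H].
    - pose proof (U_mono_l Q0 i k ltac:(lra) ltac:(lra) ltac:(lra) H).
      pose proof (U_mono_r i k i ltac:(lra) ltac:(lra) ltac:(lra) Hki). lra.
    - exfalso. pose proof (idempotent_C_absorbs_above i Q0 ltac:(lra) Hii ltac:(lra)) as Hi0.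
      pose proof (U_mono_r Q0 k i ltac:(lra) ltac:(lra) ltac:(lra) Hki).
      rewrite U_comm in Hi0 by lra. lra. }
  rewrite <- Ezi in Hii.
  destruct (internal_at_C_idempotent x z ltac:(lra) ltac:(lra) Hii) as [H|H]; fold Q0 in H; lra.
Qed.

Lemma internal_of_right_anchor m s : a < m < b -> e <= s < 1 -> U s s = s -> U m s = m ->
  (forall s', s < s' <= 1 -> e < U m s') -> internal_on_gap.
Proof.
  intros Hm Hs Hss Hms Hhm.
  pose proof (right_anchor_fixes m s Hm ltac:(lra) Hss Hms) as Hfix.
  pose proof (right_anchor_lifts m s Hm Hs Hfix Hhm) as Hhigh.
  intros x z Hx Hz. destruct (Rle_dec z s) as [H|H].
  - left. pose proof (U_ge_left x z ltac:(lra) ltac:(lra)).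
    pose proof (U_mono_r x z s ltac:(lra) ltac:(lra) ltac:(lra) H).
    rewrite Hfix in * by lra. lra.
  - right. apply gap_absorbed_by; [exact Hx|lra|]. intros x' Hx'. apply Hhigh; lra.
Qed.

Lemma left_anchor_fixes_below x i : a < x < b -> e < i <= 1 -> U i i = i -> U x i = i ->
  (forall t, e <= t < i -> U x t <= b) -> forall t, e <= t < i -> U x t = x.
Proof.
  intros Hx Hi Hii Hxi Hlow t Ht.
  set (q := U x t).
  assert (Hq : x <= q <= b) by (split; [apply U_ge_left; lra|apply Hlow; lra]).
  destruct (Req_dec q x) as [E|E]; [exact E|exfalso].
  destruct (shift_escapes_T x (q - x) Hx ltac:(lra) ltac:(lra)) as [N HN].
  assert (Hpw : forall n, Upow t n < i).
  { induction n as [|n IHn]; [simpl; lra|].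
    pose proof (Upow_C t n ltac:(lra)) as Hp.
    change (Upow t (S n)) with (U t (Upow t n)).
    assert (H1 : U t (Upow t n) <= U i i).
    { apply Rle_trans with (U i (Upow t n)); [apply U_mono_l|apply U_mono_r]; lra. }
    destruct (Req_dec (U t (Upow t n)) i) as [E2|E2]; [exfalso|lra].
    assert (E3 : U x i = U (U x (Upow t n)) t).
    { rewrite <- E2, (U_comm t (Upow t n)) by lra. apply U_assoc; lra. }
    pose proof (Hlow (Upow t n) ltac:(lra)).
    pose proof (U_range x (Upow t n) ltac:(lra) ltac:(lra)).
    pose proof (U_le_right (U x (Upow t n)) t ltac:(lra) ltac:(lra)). lra. }
  pose proof (HN t ltac:(lra) ltac:(unfold q; lra)).
  pose proof (Upow_C t N ltac:(lra)). pose proof (Hpw N).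
  pose proof (Hlow (Upow t N) ltac:(lra)). lra.
Qed.

Lemma internal_of_left_anchor x0 i : a < x0 < b -> e < i <= 1 -> U i i = i -> U x0 i = i ->
  (forall t, e <= t < i -> U x0 t <= b) -> internal_on_gap.
Proof.
  intros Hx0 Hi Hii Hx0i Hlow.
  assert (Hall1 : forall x, a < x < b -> U x i = i).
  { intros x Hx. destruct (Rle_dec x0 x) as [H|H].
    - pose proof (U_mono_l x0 x i ltac:(lra) ltac:(lra) ltac:(lra) H).
      pose proof (U_le_right x i ltac:(lra) ltac:(lra)). lra.
    - destruct (gap_divisible_strict x x0 ltac:(lra) ltac:(lra)) as [r [Hr Hr']].
      assert (Hxr : x < r) by (rewrite <- Hr'; apply gap_U_lt_right; lra).
      assert (E : U x i = U r i)
        by (rewrite <- Hr', (U_comm x0 r), <- U_assoc, Hx0i by lra; reflexivity).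
      destruct (internal_at_C_idempotent x i ltac:(lra) ltac:(lra) Hii) as [H1|H1]; [|exact H1].
      destruct (internal_at_C_idempotent r i ltac:(lra) ltac:(lra) Hii) as [H2|H2]; lra. }
  assert (Hfix0 := left_anchor_fixes_below x0 i Hx0 Hi Hii Hx0i Hlow).
  assert (Hall2 : forall x t, a < x < b -> e <= t < i -> U x t <= b).
  { intros x t Hx Ht. destruct (Rle_dec x x0) as [H|H].
    - apply Rle_trans with (U x0 t); [apply U_mono_l; lra|apply Hlow; lra].
    - destruct (gap_divisible_strict x0 x ltac:(lra) ltac:(lra)) as [r [Hr Hr']].
      assert (Hxr : x0 < r) by (rewrite <- Hr'; apply gap_U_lt_right; lra).
      destruct (gap_C_dichotomy x t ltac:(lra) ltac:(lra)) as [H1|H1]; [exact H1|exfalso].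
      assert (E : U x0 t = U r (U x t))
        by (rewrite <- Hr', (U_comm x r) by lra; symmetry; apply U_assoc; lra).
      rewrite Hfix0 in E by lra.
      pose proof (U_range x t ltac:(lra) ltac:(lra)).
      pose proof (U_ge_left r (U x t) ltac:(lra) ltac:(lra)). lra. }
  intros x z Hx Hz. destruct (Rlt_dec z i) as [H|H].
  - left. apply (left_anchor_fixes_below x i Hx Hi Hii (Hall1 x Hx)); [|lra].
    intros t Ht. apply Hall2; lra.
  - right. rewrite <- (idempotent_C_absorbs_above i z ltac:(lra) Hii ltac:(lra)).
    rewrite U_assoc, Hall1 by lra. reflexivity.
Qed.

Lemma internal_of_jumps_right x y : a < x < b -> jumps_right x y -> U x y < b ->
  internal_on_gap.
Proof.
  intros Hx [Hy [Hm Hh]] Hmb.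
  destruct (fixing_stabilizer y ltac:(lra)) as [s [Hs [Hys [Hss Hgt]]]].
  assert (Hxm : x <= U x y) by (apply U_ge_left; lra).
  apply (internal_of_right_anchor (U x y) s ltac:(lra) Hs Hss).
  - rewrite <- U_assoc, Hys by lra. reflexivity.
  - intros s' Hs'. rewrite <- U_assoc by lra. apply Hh.
    pose proof (Hgt s' Hs'). pose proof (U_range y s' ltac:(lra) ltac:(lra)). lra.
Qed.

Lemma divisor_bounds_section x1 x2 w t : a < w < b -> a < x2 < b -> U x2 w = x1 ->
  e <= t <= 1 -> U x2 t <= b -> U x1 t <= w.
Proof.
  intros Hw Hx2 Hw' Ht Hl. rewrite <- Hw', (U_comm x2 w), <- U_assoc by lra.
  pose proof (U_ge_left x2 t ltac:(lra) Ht).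
  apply U_le_left; lra.
Qed.

(** When [y] is not idempotent, [y = U t sg] for [t < y] and [sg] just above the stabilizer
    [s0] of [y]; this transports the jump of [u_(x1)] at [y] to a right anchor [U w _] at
    [s0], where [U x2 w = x1]. *)
Lemma internal_of_two_left_jumps x1 x2 w y : a < x1 -> x1 < x2 -> x2 < b -> a < w < b ->
  U x2 w = x1 -> jumps_left x1 y -> jumps_left x2 y -> internal_on_gap.
Proof.
  intros H1 H12 H2 Hw Hw' [_ [Hm1 _]] [Hy [Hm2 Hl2]].
  destruct (Req_dec (U y y) y) as [Eyy|Eyy].
  - destruct (internal_at_C_idempotent x2 y ltac:(lra) ltac:(lra) Eyy) as [E|E]; [lra|].
    apply (internal_of_left_anchor x2 y ltac:(lra) ltac:(lra) Eyy E Hl2).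
  - destruct (nonidempotent_stabilizer y Hy Eyy) as [s0 [Hs0 [Hy1 [Hys0 [Hs0s0 Hgt]]]]].
    assert (Hwh : forall sg, s0 < sg <= 1 -> e < U w sg).
    { intros sg Hsg.
      destruct (C_factor_below y sg Hy ltac:(lra) (Hgt sg Hsg)) as [t [sg' [Ht [Hsg' Hsg'']]]].
      assert (E : U x1 y = U (U x1 t) sg') by (rewrite <- Hsg''; apply U_assoc; lra).
      pose proof (divisor_bounds_section x1 x2 w t Hw ltac:(lra) Hw' ltac:(lra) (Hl2 t Ht)).
      pose proof (U_range x1 t ltac:(lra) ltac:(lra)).
      pose proof (U_mono_l (U x1 t) w sg' ltac:(lra) ltac:(lra) ltac:(lra) ltac:(lra)).
      pose proof (U_mono_r w sg' sg ltac:(lra) ltac:(lra) ltac:(lra) ltac:(lra)). lra. }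
    destruct (internal_at_C_idempotent w s0 ltac:(lra) ltac:(lra) Hs0s0) as [E|E].
    + apply (internal_of_right_anchor w s0 ltac:(lra) ltac:(lra) Hs0s0 E Hwh).
    + exfalso. set (p := U x2 s0).
      assert (Hp : x2 <= p <= b) by (split; [apply U_ge_left; lra|apply Hl2; lra]).
      assert (Ewp : U w p = p)
        by (unfold p; rewrite U_assoc, (U_comm w x2), <- U_assoc, E by lra; reflexivity).
      apply (gap_not_absorbing p w); [lra|lra|rewrite U_comm by lra; exact Ewp].
Qed.

Lemma internal_of_two_discontinuities x1 x2 y : a < x1 -> x1 < x2 -> x2 < b -> 0 <= y <= 1 ->
  ~ sec_continuous_at U x1 y -> ~ sec_continuous_at U x2 y -> internal_on_gap.
Proof.
  intros H1 H12 H2 Hy Hd1 Hd2.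
  destruct (gap_divisible_strict x1 x2 ltac:(lra) ltac:(lra)) as [w [Hw Hw']].
  pose proof (divisor_bounds_section x1 x2 w y Hw ltac:(lra) Hw') as HW.
  destruct (discontinuity_jumps_over_gap x1 y ltac:(lra) Hy Hd1) as [R1|L1],
    (discontinuity_jumps_over_gap x2 y ltac:(lra) Hy Hd2) as [R2|L2].
  - destruct R2 as [Hy2 [Hm2 _]]. apply (internal_of_jumps_right x1 y ltac:(lra) R1).
    pose proof (HW ltac:(lra) Hm2). lra.
  - destruct (Rle_dec (U x1 y) w) as [H|H].
    + apply (internal_of_jumps_right x1 y ltac:(lra) R1). lra.
    + exfalso. destruct R1 as [Hy1 [Hm1 _]], L2 as [Hy2 [_ Hl2]].
      apply (no_left_jump_in_gap x1 y (U x1 y - w) ltac:(lra) ltac:(lra) ltac:(lra) Hm1).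
      intros t Ht.
      pose proof (divisor_bounds_section x1 x2 w t Hw ltac:(lra) Hw' ltac:(lra) (Hl2 t Ht)). lra.
  - destruct R2 as [Hy2 [Hm2 _]], L1 as [_ [Hm1 _]]. pose proof (HW ltac:(lra) Hm2). lra.
  - exact (internal_of_two_left_jumps x1 x2 w y H1 H12 H2 Hw Hw' L1 L2).
Qed.

End Gap.
End Uninorm.

Lemma pseudo_internal_below_e (U : R -> R -> R) (e a b : R) :
  0 < e < 1 -> uninorm U e -> in_class_U U e ->
  idempotent U a -> idempotent U b -> a < b -> b <= e ->
  (forall c, a < c < b -> ~ idempotent U c) ->
  (exists y x1 x2, I01 y /\ a < x1 < b /\ a < x2 < b /\ x1 < x2 /\
     ~ sec_continuous_at U x1 y /\ ~ sec_continuous_at U x2 y) ->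
  forall x z, a <= x <= b -> e <= z <= 1 -> U x z = x \/ U x z = z.
Proof.
  intros He Hu Hc [Ia Haa] [Ib Hbb] Hab Hbe Hno [y [x1 [x2 [Hy [H1 [H2 [H12 [Hd1 Hd2]]]]]]]]
    x z Hx Hz.
  unfold I01 in *.
  assert (Hno' : forall c, a < c < b -> U c c <> c)
    by (intros c Hc' E; apply (Hno c Hc'); split; [unfold I01; lra|exact E]).
  destruct (Req_dec x a) as [->|Ea]; [apply (idempotent_T_internal U e); auto; lra|].
  destruct (Req_dec x b) as [->|Eb]; [apply (idempotent_T_internal U e); auto; lra|].
  apply (internal_of_two_discontinuities U e He Hu Hc a b ltac:(lra) Haa Hbb Hab Hbe Hno'
    x1 x2 y); lra || assumption.
Qed.

Definition dual (U : R -> R -> R) (p q : R) : R := 1 - U (1 - p) (1 - q).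

Lemma I01_compl p : I01 p -> I01 (1 - p).
Proof. unfold I01; lra. Qed.

Lemma uninorm_dual U e : uninorm U e -> uninorm (dual U) (1 - e).
Proof.
  intros [Ie [Hcl [Hcm [Has [Hmo Hne]]]]]. unfold dual.
  split; [apply I01_compl, Ie|].
  split; [intros x y Hx Hy; apply I01_compl, Hcl; apply I01_compl; assumption|].
  split; [intros x y Hx Hy; rewrite Hcm; [reflexivity|apply I01_compl; assumption..]|].
  split.
  - intros x y z Hx Hy Hz.
    replace (1 - (1 - U (1 - y) (1 - z))) with (U (1 - y) (1 - z)) by ring.
    replace (1 - (1 - U (1 - x) (1 - y))) with (U (1 - x) (1 - y)) by ring.
    rewrite Has; [reflexivity|apply I01_compl; assumption..].
  - split.
    + intros x1 x2 y Hx1 Hx2 Hy H12.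
      assert (U (1 - x2) (1 - y) <= U (1 - x1) (1 - y))
        by (apply Hmo; [apply I01_compl; assumption..|lra]).
      lra.
    + intros x Hx. replace (1 - (1 - e)) with e by ring.
      rewrite Hne; [ring|apply I01_compl, Hx].
Qed.

Lemma continuous_on_unit_square_compl f g : continuous_on_unit_square g ->
  (forall p q, I01 p -> I01 q -> f p q = 1 - g (1 - p) (1 - q)) ->
  continuous_on_unit_square f.
Proof.
  intros Hg Hf x y Hx Hy eps Heps.
  destruct (Hg (1 - x) (1 - y) (I01_compl x Hx) (I01_compl y Hy) eps Heps) as [d [Hd Hd']].
  exists d. split; [exact Hd|]. intros x' y' Hx' Hy' H1 H2.
  rewrite (Hf x' y' Hx' Hy'), (Hf x y Hx Hy).
  replace (1 - g (1 - x') (1 - y') - (1 - g (1 - x) (1 - y)))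
    with (- (g (1 - x') (1 - y') - g (1 - x) (1 - y))) by ring.
  rewrite Rabs_Ropp. apply Hd'; try apply I01_compl; auto.
  - replace (1 - x' - (1 - x)) with (- (x' - x)) by ring. rewrite Rabs_Ropp; exact H1.
  - replace (1 - y' - (1 - y)) with (- (y' - y)) by ring. rewrite Rabs_Ropp; exact H2.
Qed.

Lemma in_class_U_dual U e : 0 < e < 1 -> in_class_U U e -> in_class_U (dual U) (1 - e).
Proof.
  intros He [HT HC]. split.
  - apply (continuous_on_unit_square_compl _ _ HC). intros p q Hp Hq. unfold T_U, C_U, dual.
    replace (e + (1 - e) * (1 - p)) with (1 - (1 - e) * p) by ring.
    replace (e + (1 - e) * (1 - q)) with (1 - (1 - e) * q) by ring.
    field. lra.
  - apply (continuous_on_unit_square_compl _ _ HT). intros p q Hp Hq. unfold T_U, C_U, dual.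
    replace (1 - (1 - e + (1 - (1 - e)) * p)) with (e * (1 - p)) by ring.
    replace (1 - (1 - e + (1 - (1 - e)) * q)) with (e * (1 - q)) by ring.
    field. lra.
Qed.

Lemma idempotent_dual U p : idempotent U p -> idempotent (dual U) (1 - p).
Proof.
  intros [Ip Hp]. split; [apply I01_compl, Ip|]. unfold dual.
  replace (1 - (1 - p)) with p by ring. rewrite Hp. ring.
Qed.

Lemma idempotent_dual_inv U p : idempotent (dual U) (1 - p) -> idempotent U p.
Proof.
  intros [Ip Hp]. unfold dual, I01 in *. replace (1 - (1 - p)) with p in Hp by ring.
  split; [unfold I01; lra|lra].
Qed.

Lemma sec_discontinuous_dual U x y :
  ~ sec_continuous_at U x y -> ~ sec_continuous_at (dual U) (1 - x) (1 - y).
Proof.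
  intros Hn Hcont. apply Hn. intros eps Heps. destruct (Hcont eps Heps) as [d [Hd Hd']].
  exists d. split; [exact Hd|]. intros t [Ht Htd]. simpl in *. unfold R_dist in *.
  assert (Hdt : Rabs (1 - t - (1 - y)) < d)
    by (replace (1 - t - (1 - y)) with (- (t - y)) by ring; rewrite Rabs_Ropp; exact Htd).
  specialize (Hd' (1 - t) (conj (I01_compl t Ht) Hdt)). simpl in Hd'. unfold R_dist, dual in Hd'.
  replace (1 - (1 - x)) with x in Hd' by ring.
  replace (1 - (1 - t)) with t in Hd' by ring. replace (1 - (1 - y)) with y in Hd' by ring.
  replace (1 - U x t - (1 - U x y)) with (- (U x t - U x y)) in Hd' by ring.
  rewrite Rabs_Ropp in Hd'. exact Hd'.
Qed.

Lemma pseudo_internal_above_e (U : R -> R -> R) (e a b : R) :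
  0 < e < 1 -> uninorm U e -> in_class_U U e ->
  idempotent U a -> idempotent U b -> a < b -> e <= a ->
  (forall c, a < c < b -> ~ idempotent U c) ->
  (exists y x1 x2, I01 y /\ a < x1 < b /\ a < x2 < b /\ x1 < x2 /\
     ~ sec_continuous_at U x1 y /\ ~ sec_continuous_at U x2 y) ->
  forall x z, a <= x <= b -> 0 <= z <= e -> U x z = x \/ U x z = z.
Proof.
  intros He Hu Hc Ha Hb Hab Hea Hno [y [x1 [x2 [Hy [H1 [H2 [H12 [Hd1 Hd2]]]]]]]] x z Hx Hz.
  assert (Hno' : forall c, 1 - b < c < 1 - a -> ~ idempotent (dual U) c).
  { intros c Hc' Hi. apply (Hno (1 - c)); [lra|]. apply idempotent_dual_inv.
    replace (1 - (1 - c)) with c by ring. exact Hi. }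
  assert (Hex : exists y x1 x2, I01 y /\ 1 - b < x1 < 1 - a /\ 1 - b < x2 < 1 - a /\
    x1 < x2 /\ ~ sec_continuous_at (dual U) x1 y /\ ~ sec_continuous_at (dual U) x2 y).
  { exists (1 - y), (1 - x2), (1 - x1). split; [apply I01_compl, Hy|].
    repeat split; try lra; apply sec_discontinuous_dual; assumption. }
  destruct (pseudo_internal_below_e (dual U) (1 - e) (1 - b) (1 - a) ltac:(lra)
    (uninorm_dual U e Hu) (in_class_U_dual U e He Hc) (idempotent_dual U b Hb)
    (idempotent_dual U a Ha) ltac:(lra) ltac:(lra) Hno' Hex (1 - x) (1 - z) ltac:(lra) ltac:(lra))
    as [E|E];
    unfold dual in E; replace (1 - (1 - x)) with x in E by ring;
    replace (1 - (1 - z)) with z in E by ring; lra.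
Qed.

Theorem lemma10 (U : R -> R -> R) (e a b : R) :
  0 < e < 1 ->
  uninorm U e ->
  in_class_U U e ->
  idempotent U a -> idempotent U b -> a < b ->
  (forall c, a < c < b -> ~ idempotent U c) ->
  (exists y x1 x2, I01 y /\ a < x1 < b /\ a < x2 < b /\ x1 < x2 /\
     ~ sec_continuous_at U x1 y /\ ~ sec_continuous_at U x2 y) ->
  forall x z, a <= x <= b -> I01 z ->
    ((x <= e /\ e <= z) \/ (e <= x /\ z <= e)) ->
    U x z = x \/ U x z = z.
Proof.
  intros He Hu Hc Ha Hb Hab Hno Hex x z Hx Hz Hr. unfold I01 in Hz.
  assert (Hez : U e z = z) by (apply (U_neutral_l U e Hu); lra).
  destruct (Rle_dec b e) as [Hbe|Hbe].
  - destruct Hr as [[Hxe Hze]|[Hex' Hze]].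
    + apply (pseudo_internal_below_e U e a b); auto; lra.
    + replace x with e by lra. right. exact Hez.
  - assert (Hea : e <= a).
    { destruct (Rle_dec e a) as [H|H]; [exact H|exfalso].
      apply (Hno e); [lra|]. split; [unfold I01; lra|apply (U_neutral_l U e Hu); lra]. }
    destruct Hr as [[Hxe Hze]|[Hex' Hze]].
    + replace x with e by lra. right. exact Hez.
    + apply (pseudo_internal_above_e U e a b); auto; lra.
Qed.
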